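(* Let $E$ be a bi-Hilbertian bimodule over a unital $C^*$-algebra $A$. If a state $\phi:A\to\mathbb{C}$ is $E$-invariant, then it is a trace.
   Context: A bi-Hilbertian $A$-bimodule is an $A$-bimodule $E$ which is a full right Hilbert $A$-module with inner product $(\cdot|\cdot)_A$ and a full left Hilbert $A$-module with inner product ${}_A(\cdot|\cdot)$, such that the left action is adjointable for $(\cdot|\cdot)_A$ and the right action is adjointable for ${}_A(\cdot|\cdot)$. A state $\phi$ on $A$ is $E$-invariant if $\phi((e_1|e_2)_A)=\phi({}_A(e_2|e_1))$ for all $e_1,e_2\in E$. *)

From HB Require Import structures.
From mathcomp Require Import all_boot all_order all_algebra.
From mathcomp Require Import reals complex.
Set Implicit Arguments. Unset Strict Implicit. Unset Printing Implicit Defensive.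
Import Order.TTheory GRing.Theory Num.Theory.
Local Open Scope ring_scope.
Local Open Scope complex_scope.

Section Defs.
Variable R : realType.
Local Notation C := R[i].

Definition cmod (c : C) : R := Num.sqrt (complex.Re c ^+ 2 + complex.Im c ^+ 2).

Definition cauchy_complete (V : zmodType) (nrm : V -> R) : Prop :=
  forall u : nat -> V,
    (forall eps : R, 0 < eps -> exists N : nat, forall m n : nat,
        (N <= m)%N -> (N <= n)%N -> nrm (u m - u n) < eps) ->
    exists l : V, forall eps : R, 0 < eps -> exists N : nat, forall n : nat,
        (N <= n)%N -> nrm (u n - l) < eps.

Record unital_Cstar_algebra (A : algType C) (star : A -> A) (nA : A -> R) : Prop := {
  star_add   : forall a b : A, star (a + b) = star a + star b;
  star_scale : forall (c : C) (a : A), star (c *: a) = c^* *: star a;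
  star_mul   : forall a b : A, star (a * b) = star b * star a;
  star_invol : forall a : A, star (star a) = a;
  nA_eq0     : forall a : A, nA a = 0 -> a = 0;
  nA_scale   : forall (c : C) (a : A), nA (c *: a) = cmod c * nA a;
  nA_triangle : forall a b : A, nA (a + b) <= nA a + nA b;
  nA_submult : forall a b : A, nA (a * b) <= nA a * nA b;
  nA_Cstar   : forall a : A, nA (star a * a) = nA a ^+ 2;
  nA_complete : cauchy_complete nA
}.

Definition Cstar_positive (A : algType C) (star : A -> A) (a : A) : Prop :=
  exists b : A, a = star b * b.

(** Fullness: the closed linear span of the values of the inner product is A. *)
Definition full_ip (A : algType C) (nA : A -> R) (E : Type) (ip : E -> E -> A) : Prop :=
  forall (a : A) (eps : R), 0 < eps ->
    exists s : seq (C * (E * E)),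
      nA (a - \sum_(t <- s) (t.1 *: ip t.2.1 t.2.2)) < eps.

Record full_right_Hilbert_module (A : algType C) (star : A -> A) (nA : A -> R)
    (E : lmodType C) (ract : E -> A -> E) (ip : E -> E -> A) : Prop := {
  ract_addl  : forall (e f : E) (a : A), ract (e + f) a = ract e a + ract f a;
  ract_addr  : forall (e : E) (a b : A), ract e (a + b) = ract e a + ract e b;
  ract_scalel : forall (c : C) (e : E) (a : A), ract (c *: e) a = c *: ract e a;
  ract_scaler : forall (c : C) (e : E) (a : A), ract e (c *: a) = c *: ract e a;
  ract_mul   : forall (e : E) (a b : A), ract (ract e a) b = ract e (a * b);
  rip_addr   : forall e f g : E, ip e (f + g) = ip e f + ip e g;
  rip_scaler : forall (c : C) (e f : E), ip e (c *: f) = c *: ip e f;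
  rip_ract   : forall (e f : E) (a : A), ip e (ract f a) = ip e f * a;
  rip_star   : forall e f : E, star (ip e f) = ip f e;
  rip_pos    : forall e : E, Cstar_positive star (ip e e);
  rip_def    : forall e : E, ip e e = 0 -> e = 0;
  rip_complete : cauchy_complete (fun e : E => Num.sqrt (nA (ip e e)));
  rip_full   : full_ip nA ip
}.

Record full_left_Hilbert_module (A : algType C) (star : A -> A) (nA : A -> R)
    (E : lmodType C) (lact : A -> E -> E) (lip : E -> E -> A) : Prop := {
  lact_addl  : forall (a b : A) (e : E), lact (a + b) e = lact a e + lact b e;
  lact_addr  : forall (a : A) (e f : E), lact a (e + f) = lact a e + lact a f;
  lact_scalel : forall (c : C) (a : A) (e : E), lact (c *: a) e = c *: lact a e;
  lact_scaler : forall (c : C) (a : A) (e : E), lact a (c *: e) = c *: lact a e;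
  lact_mul   : forall (a b : A) (e : E), lact a (lact b e) = lact (a * b) e;
  lip_addl   : forall e f g : E, lip (e + f) g = lip e g + lip f g;
  lip_scalel : forall (c : C) (e f : E), lip (c *: e) f = c *: lip e f;
  lip_lact   : forall (a : A) (e f : E), lip (lact a e) f = a * lip e f;
  lip_star   : forall e f : E, star (lip e f) = lip f e;
  lip_pos    : forall e : E, Cstar_positive star (lip e e);
  lip_def    : forall e : E, lip e e = 0 -> e = 0;
  lip_complete : cauchy_complete (fun e : E => Num.sqrt (nA (lip e e)));
  lip_full   : full_ip nA lip
}.

Record bi_Hilbertian_bimodule (A : algType C) (star : A -> A) (nA : A -> R)
    (E : lmodType C) (lact : A -> E -> E) (ract : E -> A -> E)
    (rip : E -> E -> A) (lip : E -> E -> A) : Prop := {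
  bi_assoc : forall (a b : A) (e : E), ract (lact a e) b = lact a (ract e b);
  bi_right : full_right_Hilbert_module star nA ract rip;
  bi_left  : full_left_Hilbert_module star nA lact lip;
  bi_ladj  : forall (a : A) (e f : E), rip (lact a e) f = rip e (lact (star a) f);
  bi_radj  : forall (a : A) (e f : E), lip (ract e a) f = lip e (ract f (star a))
}.

(** A state: a positive linear functional of norm one. *)
Definition is_state (A : algType C) (star : A -> A) (nA : A -> R) (phi : A -> C) : Prop :=
  [/\ (forall (c : C) (a b : A), phi (c *: a + b) = c * phi a + phi b),
      (forall b : A, (0 : C) <= phi (star b * b)),
      (forall a : A, cmod (phi a) <= nA a) &
      (forall k : R, k < 1 -> exists a : A, nA a <= 1 /\ k < cmod (phi a))].

Definition E_invariant (A : algType C) (E : Type) (rip lip : E -> E -> A) (phi : A -> C) : Prop :=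
  forall e1 e2 : E, phi (rip e1 e2) = phi (lip e2 e1).

Definition is_trace (A : algType C) (phi : A -> C) : Prop :=
  forall a b : A, phi (a * b) = phi (b * a).

End Defs.

From HB Require Import structures.
From mathcomp Require Import all_boot all_order all_algebra.
From mathcomp Require Import reals complex.
From mathcomp Require Import lra.
Set Implicit Arguments. Unset Strict Implicit. Unset Printing Implicit Defensive.
Import Order.TTheory GRing.Theory Num.Theory.
Local Open Scope ring_scope.

(* For inner products, invariance moves [a] from the right to the left:
   phi((e1|e2) a) = phi((e1|e2 a)) = phi(_A(e2 a|e1)) = phi(_A(e2|e1 a^* )) = phi((e1 a^*|e2)) = phi(a (e1|e2)).
   By linearity this holds on the span of the inner products, which is dense by fullness;
   since the state is bounded by the norm and the norm is submultiplicative,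
   |phi(b a - a b)| <= ||b - s|| (2 ||a|| + 1) for every s in that span, so phi(b a - a b) = 0. *)

Section ComplexModulus.
Variable R : realType.

Lemma cmod_ge0 (z : R[i]) : 0 <= cmod z.
Proof. exact: sqrtr_ge0. Qed.

Lemma cmod_eq0 (z : R[i]) : cmod z = 0 -> z = 0.
Proof.
case: z => x y /eqP; rewrite sqrtr_eq0 /= => sum_le0.
have /eqP x2_0 : x ^+ 2 == 0 by rewrite eq_le sqr_ge0 andbT; have := sqr_ge0 y; lra.
have /eqP y2_0 : y ^+ 2 == 0 by rewrite eq_le sqr_ge0 andbT; have := sqr_ge0 x; lra.
by move/eqP: x2_0; rewrite sqrf_eq0 => /eqP ->; move/eqP: y2_0; rewrite sqrf_eq0 => /eqP ->.
Qed.

Lemma cmodN1 : cmod (-1 : R[i]) = 1.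
Proof. by rewrite /cmod /= oppr0 expr0n /= addr0 sqrrN expr1n sqrtr1. Qed.

Lemma cmod_lt_eq0 (z : R[i]) : (forall e : R, 0 < e -> cmod z < e) -> z = 0.
Proof.
move=> small; apply: cmod_eq0; apply/eqP; rewrite eq_le cmod_ge0 andbT.
by rewrite leNgt; apply/negP => /small; rewrite ltxx.
Qed.

End ComplexModulus.

Section LinearFunctional.
Variables (R : realType) (V : lmodType R[i]) (phi : V -> R[i]).
Hypothesis phi_linear : forall (c : R[i]) (x y : V), phi (c *: x + y) = c * phi x + phi y.

Lemma phi0 : phi 0 = 0.
Proof.
have := phi_linear 1 0 0; rewrite scaler0 addr0 mul1r => h.
by apply: (addrI (phi 0)); rewrite addr0 -h.
Qed.

Lemma phiD (x y : V) : phi (x + y) = phi x + phi y.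
Proof. by have := phi_linear 1 x y; rewrite scale1r mul1r. Qed.

Lemma phiZ (c : R[i]) (x : V) : phi (c *: x) = c * phi x.
Proof. by have := phi_linear c x 0; rewrite !addr0 phi0 addr0. Qed.

Lemma phiB (x y : V) : phi (x - y) = phi x - phi y.
Proof. by rewrite phiD -scaleN1r phiZ mulN1r. Qed.

End LinearFunctional.

Section Seminorm.
Variables (R : realType) (V : lmodType R[i]) (nrm : V -> R).
Hypothesis nrm_scale : forall (c : R[i]) (x : V), nrm (c *: x) = cmod c * nrm x.
Hypothesis nrm_triangle : forall x y : V, nrm (x + y) <= nrm x + nrm y.

Lemma nrm0 : nrm 0 = 0.
Proof. by rewrite -(scale0r (0 : V)) nrm_scale /cmod /= expr0n /= addr0 sqrtr0 mul0r. Qed.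

Lemma nrmN (x : V) : nrm (- x) = nrm x.
Proof. by rewrite -scaleN1r nrm_scale cmodN1 mul1r. Qed.

Lemma nrm_ge0 (x : V) : 0 <= nrm x.
Proof. by have := nrm_triangle x (- x); rewrite subrr nrm0 nrmN; lra. Qed.

End Seminorm.

Section BoundedFunctional.
Variables (R : realType) (A : algType R[i]) (nA : A -> R) (phi : A -> R[i]).
Hypothesis nA_scale : forall (c : R[i]) (x : A), nA (c *: x) = cmod c * nA x.
Hypothesis nA_triangle : forall x y : A, nA (x + y) <= nA x + nA y.
Hypothesis nA_submult : forall x y : A, nA (x * y) <= nA x * nA y.
Hypothesis phi_linear : forall (c : R[i]) (x y : A), phi (c *: x + y) = c * phi x + phi y.
Hypothesis phi_bounded : forall x : A, cmod (phi x) <= nA x.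

Let nA_ge0 := nrm_ge0 nA_scale nA_triangle.

Lemma cmod_phi_commutator_le (x a : A) :
  cmod (phi (x * a - a * x)) <= nA x * (2 * nA a + 1).
Proof.
have tri := nA_triangle (x * a) (- (a * x)).
rewrite (nrmN nA_scale) in tri.
have := nA_submult x a; have := nA_submult a x.
have := phi_bounded (x * a - a * x); have := nA_ge0 x; have := nA_ge0 a.
rewrite (mulrC (nA a) (nA x)); nra.
Qed.

Lemma phi_commute_of_approx (a b : A) :
  (forall e : R, 0 < e -> exists x : A, nA (b - x) < e /\ phi (x * a) = phi (a * x)) ->
  phi (b * a) = phi (a * b).
Proof.
move=> approx; apply/eqP; rewrite -subr_eq0 -(phiB phi_linear); apply/eqP.
apply: cmod_lt_eq0 => e e_gt0.
have K_gt0 : 0 < 2 * nA a + 1 by have := nA_ge0 a; lra.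
have [x [bx_small x_comm]] := approx _ (divr_gt0 e_gt0 K_gt0).
have -> : phi (b * a - a * b) = phi ((b - x) * a - a * (b - x)).
  by rewrite mulrBl mulrBr !(phiB phi_linear) x_comm opprB addrA subrK.
apply: le_lt_trans (cmod_phi_commutator_le _ _) _.
by rewrite -ltr_pdivlMr.
Qed.

End BoundedFunctional.

Section InvariantFunctional.
Variables (R : realType) (A : algType R[i]) (star : A -> A) (nA : A -> R).
Variables (E : lmodType R[i]) (lact : A -> E -> E) (ract : E -> A -> E).
Variables (rip lip : E -> E -> A) (phi : A -> R[i]).
Hypothesis HA : unital_Cstar_algebra star nA.
Hypothesis HB : bi_Hilbertian_bimodule star nA lact ract rip lip.
Hypothesis phi_linear : forall (c : R[i]) (x y : A), phi (c *: x + y) = c * phi x + phi y.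
Hypothesis phi_inv : E_invariant rip lip phi.

Let HR := bi_right HB.

Lemma phi_rip_mulC (e1 e2 : E) (a : A) : phi (rip e1 e2 * a) = phi (a * rip e1 e2).
Proof.
rewrite -(rip_ract HR) phi_inv (bi_radj HB) -phi_inv.
by rewrite -(rip_star HR) (rip_ract HR) (star_mul HA) (star_invol HA) (rip_star HR).
Qed.

Lemma phi_span_rip_mulC (s : seq (R[i] * (E * E))) (a : A) :
  let x := \sum_(t <- s) (t.1 *: rip t.2.1 t.2.2) in phi (x * a) = phi (a * x).
Proof.
elim: s => [|t s IH] /=; first by rewrite big_nil mul0r mulr0.
rewrite big_cons mulrDl mulrDr !(phiD phi_linear) IH.
by rewrite -scalerAl -scalerAr !(phiZ phi_linear) phi_rip_mulC.
Qed.

End InvariantFunctional.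

Theorem mainTheorem15 (R : realType) (A : algType R[i]) (star : A -> A) (nA : A -> R)
    (E : lmodType R[i]) (lact : A -> E -> E) (ract : E -> A -> E)
    (rip lip : E -> E -> A) (phi : A -> R[i]) :
  unital_Cstar_algebra star nA ->
  bi_Hilbertian_bimodule star nA lact ract rip lip ->
  is_state star nA phi ->
  E_invariant rip lip phi ->
  is_trace phi.
Proof.
move=> HA HB [phi_linear _ phi_bounded _] phi_inv b a.
apply: (phi_commute_of_approx (nA_scale HA) (nA_triangle HA) (nA_submult HA)
         phi_linear phi_bounded) => e e_gt0.
have [s approx] := rip_full (bi_right HB) b e_gt0.
by exists (\sum_(t <- s) (t.1 *: rip t.2.1 t.2.2));
  split; last exact: (phi_span_rip_mulC HA HB phi_linear phi_inv).
Qed.
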